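(* Let $\mathbf{p}$ be a finite list of distinct predicate constants, and for each $p\in\mathbf{p}$ let $u_p$, $\widehat u_p$ be predicate variables of the arity of $p$, with lists $\mathbf{u}$, $\widehat{\mathbf{u}}$. Then $\big(\neg(\mathbf{u}=\mathbf{p})\big)_{\Sigma 2}$ is logically equivalent to $(\mathbf{u},\widehat{\mathbf{u}})<(\mathbf{p},\neg\mathbf{p})$.
   Context: $\neg\mathbf{p}$ is the list of predicate expressions $\lambda\mathbf{x}\neg p(\mathbf{x})$, $p\in\mathbf{p}$. For predicates/predicate expressions of equal arity, $p\le q$ is $\forall\mathbf{x}(p(\mathbf{x})\to q(\mathbf{x}))$; for tuples $\le$ is componentwise conjunction and $\mathbf{a}<\mathbf{b}$ is $(\mathbf{a}\le\mathbf{b})\land\neg(\mathbf{b}\le\mathbf{a})$; $u_p$ is matched with $p$ and $\widehat u_p$ with $\lambda\mathbf{x}\neg p(\mathbf{x})$. $\mathbf{u}=\mathbf{p}$ is $\bigwedge_{p\in\mathbf{p}}\forall\mathbf{x}(u_p(\mathbf{x})\leftrightarrow p(\mathbf{x}))$. For a formula $F$, $F_{\Sigma 2}$ is the result of substituting in $F$, for each $p\in\mathbf{p}$, the predicate expression $\lambda\mathbf{x}\Big(\big(((\mathbf{u},\widehat{\mathbf{u}})\le(\mathbf{p},\neg\mathbf{p}))\land\neg u_p(\mathbf{x})\land\neg\widehat u_p(\mathbf{x})\big)\leftrightarrow\neg p(\mathbf{x})\Big)$ for $u_p$ (simultaneously for all $p$; the variables $u_p,\widehat u_p$ occurring inside these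 expressions are not further substituted). *)

From mathcomp Require Import all_boot.
Set Implicit Arguments. Unset Strict Implicit. Unset Printing Implicit Defensive.

(* Predicates are indexed by a finite type I (so they are distinct), with
   arity ar i; a relation of arity n over the domain D is a predicate on
   n-tuples of D. *)

Definition rel (D : Type) (n : nat) := n.-tuple D -> Prop.

Definition interp (I : finType) (ar : I -> nat) (D : Type) :=
  forall i : I, rel D (ar i).

Definition ple (D : Type) (n : nat) (a b : rel D n) : Prop :=
  forall x, a x -> b x.

Definition pnegI (I : finType) (ar : I -> nat) (D : Type)
  (p : interp ar D) : interp ar D := fun i x => ~ p i x.

Definition tle (I : finType) (ar : I -> nat) (D : Type)
  (a b : interp ar D) : Prop := forall i, ple (a i) (b i).

Definition tle2 (I : finType) (ar : I -> nat) (D : Type)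
  (a1 a2 b1 b2 : interp ar D) : Prop := tle a1 b1 /\ tle a2 b2.

Definition tlt2 (I : finType) (ar : I -> nat) (D : Type)
  (a1 a2 b1 b2 : interp ar D) : Prop :=
  tle2 a1 a2 b1 b2 /\ ~ tle2 b1 b2 a1 a2.

Definition eqI (I : finType) (ar : I -> nat) (D : Type)
  (u p : interp ar D) : Prop := forall i x, u i x <-> p i x.

Definition notEqF (I : finType) (ar : I -> nat) (D : Type)
  (u p : interp ar D) : Prop := ~ eqI u p.

(* The predicate expression substituted for u_p in F_{Sigma 2}:
   lambda x. ( ((u,uh) <= (p, not p)) /\ ~ u_p x /\ ~ uh_p x ) <-> ~ p x *)
Definition sigma2_expr (I : finType) (ar : I -> nat) (D : Type)
  (u uh p : interp ar D) : interp ar D :=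
  fun i x => ((tle2 u uh p (pnegI p) /\ ~ u i x /\ ~ uh i x) <-> ~ p i x).

(* F_{Sigma 2} for F = ~ (u = p): the substitution is simultaneous and the
   occurrences of u, uh inside the expressions are the original ones. *)
Definition notEq_Sigma2 (I : finType) (ar : I -> nat) (D : Type)
  (u uh p : interp ar D) : Prop := notEqF (sigma2_expr u uh p) p.

From mathcomp Require Import all_boot.
From Stdlib Require Import Classical.

(* Classically [(A <-> ~ P) <-> P] is [~ A], so [sigma2_expr u uh p] agrees
   with [p] exactly where the guard [(u, uh) <= (p, ~ p) /\ ~ u_p x /\ ~ uh_p x]
   fails.  If [(u, uh) <= (p, ~ p)] fails, the guard fails everywhere and the
   substituted list equals [p]; if it holds, the guard fails exactly where
   [u_p x \/ uh_p x], which holds everywhere iff [(p, ~ p) <= (u, uh)]. *)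

Lemma iff_negr_iff (A P : Prop) : ((A <-> ~ P) <-> P) <-> ~ A.
Proof. by case: (classic P); tauto. Qed.

Section Sigma2.

Variables (I : finType) (ar : I -> nat) (D : Type) (p u uh : interp ar D).

Lemma eqI_sigma2_expr :
  eqI (sigma2_expr u uh p) p <->
  forall (i : I) x, ~ (tle2 u uh p (pnegI p) /\ ~ u i x /\ ~ uh i x).
Proof.
by split=> E i x; apply/(iff_negr_iff _ (p i x)); exact: E.
Qed.

Lemma tle2_ge_iff_cover :
  tle2 u uh p (pnegI p) ->
  tle2 p (pnegI p) u uh <-> forall (i : I) x, u i x \/ uh i x.
Proof.
move=> [le_u le_uh]; split.
  move=> [ge_u ge_uh] i x.
  by case: (classic (p i x)) => [/ge_u | /ge_uh]; auto.
move=> cover; split=> i x px.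
  by case: (cover i x) => // /le_uh.
by case: (cover i x) => // /le_u.
Qed.

End Sigma2.

Arguments tle2_ge_iff_cover {I ar D p u uh}.

Theorem lemma6 (I : finType) (ar : I -> nat) (D : Type) (hD : inhabited D)
  (p u uh : interp ar D) :
  notEq_Sigma2 u uh p <-> tlt2 u uh p (pnegI p).
Proof.
rewrite /notEq_Sigma2 /notEqF eqI_sigma2_expr /tlt2.
split.
- move=> neq.
  have le : tle2 u uh p (pnegI p).
    by apply: NNPP => nle; apply: neq => i x [].
  split=> // /(tle2_ge_iff_cover le) cover; apply: neq => i x [_ [nu nuh]].
  by case: (cover i x).
- move=> [le nge] eq; apply/nge/(tle2_ge_iff_cover le) => i x.
  by apply: NNPP => /not_or_and nuuh; apply: (eq i x).
Qed.
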